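(* Let $H$ be a finite simple graph on vertex set $\{x_1,\dots,x_n\}$ and $G=w(H)$, a graph on $2n$ vertices, and suppose $|E(G)|\ge n+1$. Let $\mathbb{K}$ be a field of characteristic $0$, let $A=A(G)$ be the Artinian algebra of $G$ over $\mathbb{K}$, and let $\ell=x_1+\dots+x_n+y_1+\dots+y_n$ be the sum of the variables. Then the multiplication map $\times\ell:A_i\to A_{i+1}$ has maximal rank (i.e. rank $\min\{\dim_{\mathbb{K}}A_i,\dim_{\mathbb{K}}A_{i+1}\}$) for every $i<n/2$ and for $i=n-1$; moreover for $i<n/2$ the map is injective.
   Context: For a graph $H$ with vertex set $\{x_1,\dots,x_n\}$, the whiskered graph $w(H)$ has vertex set $\{x_1,\dots,x_n,y_1,\dots,y_n\}$ and edge set $E(H)\cup\{\{x_i,y_i\}: i=1,\dots,n\}$. For a graph $G$ on vertices $z_1,\dots,z_m$, its Artinian algebra over $\mathbb{K}$ is $A(G)=\mathbb{K}[z_1,\dots,z_m]/(\langle z_1^2,\dots,z_m^2\rangle+I(G))$, where $I(G)=\langle z_iz_j:\{z_i,z_j\}\in E(G)\rangle$ is the edge ideal; it is standard graded, $A=\bigoplus_i A_i$. *)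

From HB Require Import structures.
From mathcomp Require Import all_boot all_order all_algebra.
From mathcomp Require Import mpoly.
Set Implicit Arguments. Unset Strict Implicit. Unset Printing Implicit Defensive.
Import GRing.Theory.
Local Open Scope ring_scope.

(* Whiskered graph w(H): vertices 'I_(n + n); vertex lshift n i is x_i,
   vertex rshift n i is y_i. *)
Definition whisker (n : nat) (H : rel 'I_n) : rel 'I_(n + n) :=
  fun u v =>
    match split u, split v with
    | inl i, inl j => H i j
    | inl i, inr j => i == j
    | inr i, inl j => i == j
    | inr _, inr _ => false
    end.

Definition edge_count (m : nat) (G : rel 'I_m) : nat :=
  #|[set e : 'I_m * 'I_m | (e.1 < e.2)%N && G e.1 e.2]|.

(* Membership in the ideal <z_1^2,...,z_m^2> + I(G) of K[z_1,...,z_m]: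
   p is a polynomial combination of the generators z_u z_v with u = v or
   {u,v} an edge of G. *)
Definition in_ideal (K : fieldType) (m : nat) (G : rel 'I_m)
    (p : {mpoly K[m]}) : Prop :=
  exists c : 'I_m -> 'I_m -> {mpoly K[m]},
    p = \sum_(u < m) \sum_(v < m | (u == v) || G u v) c u v * ('X_u * 'X_v).

Definition ell (K : fieldType) (m : nat) : {mpoly K[m]} := \sum_(u < m) 'X_u.

(* A(G)_i is represented by homogeneous polynomials of degree i modulo the
   (homogeneous) ideal.  The map  x ell : A_i -> A_(i+1)  is injective /
   surjective: *)
Definition mult_injective (K : fieldType) (m : nat) (G : rel 'I_m) (i : nat)
  : Prop :=
  forall f : {mpoly K[m]}, f \is i.-homog ->
    in_ideal G (ell K m * f) -> in_ideal G f.

Definition mult_surjective (K : fieldType) (m : nat) (G : rel 'I_m) (i : nat)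
  : Prop :=
  forall g : {mpoly K[m]}, g \is i.+1.-homog ->
    exists f : {mpoly K[m]}, f \is i.-homog /\ in_ideal G (g - ell K m * f).

(* maximal rank (rank = min(dim A_i, dim A_(i+1))) of a linear map between
   finite-dimensional spaces = injective or surjective *)
Definition maximal_rank (K : fieldType) (m : nat) (G : rel 'I_m) (i : nat)
  : Prop :=
  mult_injective K G i \/ mult_surjective K G i.

From HB Require Import structures.
From mathcomp Require Import all_boot all_order all_algebra.
From mathcomp Require Import mpoly.
From mathcomp Require Import zify ring.
Set Implicit Arguments. Unset Strict Implicit. Unset Printing Implicit Defensive.
Import GRing.Theory.
Local Open Scope ring_scope.

(* The squarefree monomials x^S of the independent sets S of G form a K-basis of A(G),
   and the coefficient of x^S in ell * f is the sum of the coefficients of f at the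
   sets S :\ v, v in S.

   Injectivity in degree i < n/2.  The set Y of whisker vertices y_1, ..., y_n is
   independent and every x_j has at most one neighbour in it.  Induct on |S :\: Y|:
   with T = S :\: Y fixed, T :|: C is independent for every C inside the set of at
   least n - |T| vertices of Y not adjacent to T, and on the boolean lattice of these
   vertices the up-operator from k-sets to (k+1)-sets is injective as soon as
   2k + 1 <= n - |T| (this needs characteristic 0).  The remaining terms of the
   coefficient identity remove a vertex of T and vanish by induction.

   Surjectivity in degree n - 1.  An independent set S of size n contains exactly one
   of x_v, y_v for each v, and as H has an edge it contains some y_v.  Modulo the
   ideal, ell * x^(S :\ y_v) = x^S + x^(x_v |: (S :\ y_v)), since every other variable
   kills x^(S :\ y_v); this trades y_v for x_v, and induction on the number of y's
   puts x^S in the image of ell. *)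

Section SubsetSums.
Variables (K : fieldType) (T : finType).

Definition ksum (k : nat) (F : {set T} -> K) (C : {set T}) : K :=
  \sum_(A : {set T} | (A \subset C) && (#|A| == k)) F A.

Lemma exists_subset_card (D : {set T}) j :
  (j <= #|D|)%N -> exists2 C : {set T}, C \subset D & #|C| = j.
Proof.
elim: j => [|j IHj] ltjD; first by exists set0; rewrite ?sub0set ?cards0.
have [C sCD cardC] := IHj (ltnW ltjD).
have /card_gt0P[x] : (0 < #|D :\: C|)%N.
  by rewrite cardsD (setIidPr sCD) subn_gt0 cardC.
rewrite inE => /andP[xNC xD]; exists (x |: C); last by rewrite cardsU1 xNC cardC.
by rewrite subUset sub1set xD.
Qed.

Lemma ksum_card (F : {set T} -> K) (C : {set T}) : ksum #|C| F C = F C.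
Proof.
rewrite /ksum (big_pred1 C) // => A /=.
apply/andP/eqP => [[sAC /eqP cardA]|->]; last by rewrite subxx eqxx.
by apply/eqP; rewrite eqEcard sAC cardA leqnn.
Qed.

Lemma ksum0 (F : {set T} -> K) (C : {set T}) : ksum 0 F C = F set0.
Proof.
rewrite /ksum (big_pred1 set0) // => A /=.
by rewrite cards_eq0 andbC; case: eqP => [->|]; rewrite ?sub0set.
Qed.

Lemma ksum_setU1 (F : {set T} -> K) (d : T) (B : {set T}) k : d \notin B ->
  ksum k.+1 F (d |: B) = ksum k (fun A => F (d |: A)) B + ksum k.+1 F B.
Proof.
move=> dNB; have subB (A : {set T}) : d \notin A -> (A \subset d |: B) = (A \subset B).
  by move=> dNA; rewrite -subDset (setDidPl _) // disjoint_sym disjoints1.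
have notsubB (A : {set T}) : d \in A -> (A \subset B) = false.
  by move=> dA; apply: contraNF dNB => /subsetP; apply.
rewrite /ksum (bigID (fun A : {set T} => d \in A)) /=; congr (_ + _); last first.
  apply: eq_bigl => A; case: (boolP (d \in A)) => [dA|dNA].
    by rewrite notsubB ?andbF.
  by rewrite subB ?andbT.
rewrite (reindex_onto (fun A : {set T} => d |: A) (fun A : {set T} => A :\ d)) /=; last first.
  by move=> A /andP[_ dA]; rewrite setD1K.
apply: eq_bigl => A; case: (boolP (d \in A)) => [dA|dNA].
  rewrite (notsubB A dA) /=; apply/negbTE/andP => -[_ /eqP eqA].
  by move: dA; rewrite -eqA !inE eqxx.
rewrite setU1K // eqxx cardsU1 dNA setU11 subUset sub1set setU11 /= subB //.
by rewrite !andbT add1n eqSS.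
Qed.

Lemma sum_ksum_setD1 (F : {set T} -> K) (E : {set T}) k :
  \sum_(e in E) ksum k F (E :\ e) = ksum k F E *+ (#|E| - k).
Proof.
rewrite (eq_bigr (fun e => ksum k (fun A => if e \in A then 0 else F A) E)); last first.
  move=> e _; rewrite /ksum big_mkcond [RHS]big_mkcond; apply: eq_bigr => A _.
  by rewrite subsetD1; case: (A \subset E); case: (e \in A); case: (#|A| == k).
rewrite /ksum exchange_big -sumrMnl; apply: eq_bigr => A /andP[sAE /eqP cardA].
rewrite -cardA -(setIidPr sAE) -cardsD -sumr_const big_mkcond [RHS]big_mkcond.
by apply: eq_bigr => e _; rewrite !inE; case: (e \in A); case: (e \in E).
Qed.

Lemma sum_setD1_ksum (F : {set T} -> K) (C : {set T}) k : #|C| = k.+1 ->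
  \sum_(v in C) F (C :\ v) = ksum k F C.
Proof.
move=> cardC; rewrite /ksum -(big_imset F (h := fun v => C :\ v)) /=; last first.
  move=> v1 v2 v1C _ /setP/(_ v1); rewrite !inE eqxx v1C !andbT /=.
  by move/esym/negbFE/eqP.
apply: eq_bigl => A; apply/imsetP/andP => [[v vC ->]|[sAC /eqP cardA]].
  split; first exact: subD1set.
  by move: (cardsD1 v C); rewrite vC cardC add1n => -[<-].
have /cards1P[x CDA] : #|C :\: A| == 1%N.
  by rewrite cardsD (setIidPr sAC) cardC cardA subSnn.
exists x; first by have := set11 x; rewrite -CDA inE => /andP[].
by rewrite -CDA setDDr setDv set0U (setIidPr sAC).
Qed.

Lemma sum_setD1_setU (F : {set T} -> K) (A C : {set T}) : [disjoint A & C] ->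
  \sum_(v in A :|: C) F ((A :|: C) :\ v) =
  \sum_(v in A) F ((A :|: C) :\ v) + \sum_(v in C) F (A :|: C :\ v).
Proof.
move=> dAC; rewrite (eq_bigl [predU A & C]) ?bigU //=; last by move=> v; rewrite !inE.
congr (_ + _); apply: eq_bigr => v vC; congr F.
have /setDidPl Av : [disjoint A & [set v]].
  by rewrite disjoint_sym disjoints1 (disjointFl dAC vC).
by rewrite setDUl Av.
Qed.

Hypothesis K_char0 : [pchar K] =i pred0.

Lemma mulrSn_eq0 (x : K) j : x *+ j.+1 = 0 -> x = 0.
Proof.
move/eqP; rewrite -mulr_natr mulf_eq0 ((pcharf0P K).1 K_char0 j.+1) orbF.
by move/eqP.
Qed.

(* Induction on #|D|: for d in D, the sets containing d satisfy the hypothesis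
   for (k, j + 2) by double counting, and then the sets avoiding d satisfy it
   for (k + 1, j). *)
Section InductionStep.
Variables (D : {set T}) (d : T) (k j : nat) (b : {set T} -> K).
Hypothesis dD : d \in D.
Hypothesis sumb0 :
  forall C : {set T}, C \subset D -> #|C| = (k.+1 + j.+1)%N -> ksum k.+1 b C = 0.

Lemma ksum_setU1_eq0 (E : {set T}) : E \subset D :\ d -> #|E| = (k + j.+2)%N ->
  ksum k (fun A => b (d |: A)) E = 0.
Proof.
move=> sEDd cardE; have [dNE sED] : d \notin E /\ E \subset D.
  by move: sEDd; rewrite subsetD1 => /andP[].
have sumE0 e : e \in E ->
    ksum k (fun A => b (d |: A)) (E :\ e) + ksum k.+1 b (E :\ e) = 0.
  move=> eE; have dNEe : d \notin E :\ e by rewrite !inE (negbTE dNE) andbF.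
  rewrite -ksum_setU1 //; apply: sumb0.
    by rewrite subUset sub1set dD (subset_trans (subD1set E e)).
  by rewrite cardsU1 dNEe; move: (cardsD1 e E); rewrite eE cardE; lia.
have : \sum_(e in E) (ksum k (fun A => b (d |: A)) (E :\ e) + ksum k.+1 b (E :\ e)) = 0.
  exact: big1.
rewrite big_split /= !sum_ksum_setD1 (sumb0 sED) ?mul0rn ?addr0 ?cardE; last lia.
by rewrite (_ : (k + j.+2 - k = j.+2)%N) //; [apply: mulrSn_eq0 | lia].
Qed.

Lemma ksum_setD1_eq0 :
  (forall A : {set T}, A \subset D :\ d -> #|A| = k -> b (d |: A) = 0) ->
  forall B : {set T}, B \subset D :\ d -> #|B| = (k.+1 + j)%N -> ksum k.+1 b B = 0.
Proof.
move=> bd0 B sBDd cardB; have [dNB sBD] : d \notin B /\ B \subset D.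
  by move: sBDd; rewrite subsetD1 => /andP[].
have -> : ksum k.+1 b B = ksum k.+1 b (d |: B).
  rewrite ksum_setU1 // [ksum k _ B]big1 ?add0r // => A /andP[sAB /eqP cardA].
  by apply: bd0 => //; apply: subset_trans sBDd.
apply: sumb0; first by rewrite subUset sub1set dD.
by rewrite cardsU1 dNB cardB; lia.
Qed.

End InductionStep.

Lemma eq0_of_ksum_eq0 (D : {set T}) k j (b : {set T} -> K) :
  (2 * k + j <= #|D|)%N ->
  (forall C : {set T}, C \subset D -> #|C| = (k + j)%N -> ksum k b C = 0) ->
  forall A : {set T}, A \subset D -> #|A| = k -> b A = 0.
Proof.
move cardD: #|D| => N; elim: N D k j b cardD => [|N IHN] D k j b cardD le_kjN sumb0.
all: case: j le_kjN sumb0 => [|j] le_kjN sumb0.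
- by move=> A sAD cardA; rewrite -ksum_card cardA sumb0 ?addn0.
- by rewrite addnS in le_kjN.
- by move=> A sAD cardA; rewrite -ksum_card cardA sumb0 ?addn0.
case: k le_kjN sumb0 => [|k] le_kjN sumb0.
  move=> A _ /eqP; rewrite cards_eq0 => /eqP ->.
  have [C sCD cardC] : exists2 C : {set T}, C \subset D & #|C| = j.+1.
    by apply: exists_subset_card; rewrite cardD.
  by rewrite -(ksum0 b C) sumb0.
have /card_gt0P[d dD] : (0 < #|D|)%N by rewrite cardD.
have cardDd : #|D :\ d| = N by move: (cardsD1 d D); rewrite dD cardD add1n => -[].
have bd0 (A : {set T}) : A \subset D :\ d -> #|A| = k -> b (d |: A) = 0.
  apply: (IHN _ k j.+2 (fun A => b (d |: A)) cardDd); first lia.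
  exact: ksum_setU1_eq0.
have b0 (A : {set T}) : A \subset D :\ d -> #|A| = k.+1 -> b A = 0.
  apply: (IHN _ k.+1 j b cardDd); first lia.
  exact: ksum_setD1_eq0.
move=> A sAD cardA; case: (boolP (d \in A)) => [dA|dNA].
  rewrite -(setD1K dA); apply: bd0; first exact: setSD.
  by move: (cardsD1 d A); rewrite dA cardA add1n => -[].
by apply: b0 => //; rewrite subsetD1 sAD.
Qed.

End SubsetSums.

Definition indep (V : finType) (G : rel V) (S : {set V}) :=
  [forall u in S, forall v in S, (u != v) ==> ~~ G u v].

Section IndependentSets.
Variables (V : finType) (G : rel V).

Lemma indepP (S : {set V}) :
  reflect {in S &, forall u v, u != v -> ~~ G u v} (indep G S).
Proof.
apply: (iffP forallP) => [indepS u v uS vS | indepS u].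
  by move: (indepS u); rewrite uS /= => /forallP/(_ v); rewrite vS /= => /implyP.
apply/implyP => uS; apply/forallP => v; apply/implyP => vS; apply/implyP.
exact: indepS.
Qed.

Lemma indepS (S1 S2 : {set V}) : S1 \subset S2 -> indep G S2 -> indep G S1.
Proof.
by move=> /subsetP sS12 /indepP iS2; apply/indepP => u v uS vS; apply: iS2; apply: sS12.
Qed.

End IndependentSets.

Section Lifting.
Variables (K : fieldType) (V : finType) (G : rel V) (Y : {set V}) (nbr : V -> V).
Hypothesis K_char0 : [pchar K] =i pred0.
Hypothesis Y_indep : indep G Y.
Hypothesis Y_nbr_unique : forall x y, x \notin Y -> y \in Y -> G x y || G y x -> y = nbr x.

Definition nonadj (T0 : {set V}) : {set V} :=
  [set y in Y | [forall x in T0, ~~ G x y && ~~ G y x]].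

Lemma nonadj_subset (T0 : {set V}) : nonadj T0 \subset Y.
Proof. by apply/subsetP => y; rewrite inE => /andP[]. Qed.

Lemma card_nonadj (S : {set V}) : (#|Y| <= #|nonadj (S :\: Y)| + #|S :\: Y|)%N.
Proof.
have sFY := nonadj_subset (S :\: Y).
have : Y :\: nonadj (S :\: Y) \subset nbr @: (S :\: Y).
  apply/subsetP => y; rewrite !inE => /andP[yNF yY].
  move: yNF; rewrite yY /= => /forallPn[x].
  rewrite negb_imply negb_and !negbK => /andP[xSY Gxy]; apply/imsetP; exists x => //.
  by apply: Y_nbr_unique => //; move: xSY; rewrite inE => /andP[].
move/subset_leq_card; have := leq_imset_card nbr (S :\: Y).
by rewrite [#|Y :\: _|]cardsD (setIidPr sFY); lia.
Qed.

Lemma indep_nonadj (S : {set V}) : indep G S -> S :&: Y \subset nonadj (S :\: Y).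
Proof.
move=> /indepP iS; apply/subsetP => u; rewrite !inE => /andP[uS uY]; rewrite uY /=.
apply/forallP => x; apply/implyP; rewrite !inE => /andP[xNY xS].
have xu : x != u by apply: contraNneq xNY => ->.
by rewrite iS // iS // eq_sym.
Qed.

Lemma indep_setU_nonadj (S C : {set V}) :
  indep G S -> C \subset nonadj (S :\: Y) -> indep G ((S :\: Y) :|: C).
Proof.
move=> /indepP iS /subsetP sCF; apply/indepP => u v; rewrite !inE.
have nonadjP w x : w \in C -> x \notin Y -> x \in S -> ~~ G x w && ~~ G w x.
  move=> /sCF; rewrite inE => /andP[_ /forallP/(_ x)/implyP] nonadjx xNY xS.
  by apply: nonadjx; rewrite inE xNY.
case/orP => [/andP[uNY uS]|uC]; case/orP => [/andP[vNY vS]|vC] uv.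
- exact: iS.
- by case/andP: (nonadjP v u vC uNY uS).
- by case/andP: (nonadjP u v uC vNY vS).
- move: (sCF u uC) (sCF v vC); rewrite !inE => /andP[uY _] /andP[vY _].
  by move/indepP: Y_indep; apply.
Qed.

Lemma eq0_of_sum_setD1_eq0 (a : {set V} -> K) i : (2 * i < #|Y|)%N ->
  (forall S, indep G S -> #|S| = i.+1 -> \sum_(v in S) a (S :\ v) = 0) ->
  forall S, indep G S -> #|S| = i -> a S = 0.
Proof.
move=> lt_iY sum_a0 S; have [t] := ubnP #|S :\: Y|.
elim: t S => // t IHt S lt_St iS cardS.
have le_UF : (2 * #|S :&: Y| + 1 <= #|nonadj (S :\: Y)|)%N.
  by have := card_nonadj S; have := cardsID Y S; lia.
set T0 := S :\: Y in lt_St *.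
rewrite -(setID S Y) setUC -/T0.
suff sum_b0 (C : {set V}) : C \subset nonadj T0 -> #|C| = #|S :&: Y|.+1 ->
    ksum #|S :&: Y| (fun A => a (T0 :|: A)) C = 0.
  apply: (@eq0_of_ksum_eq0 K V K_char0 _ _ 1%N (fun A => a (T0 :|: A)) le_UF)
    (indep_nonadj iS) _ => //.
  by move=> C; rewrite addn1; exact: sum_b0.
move=> sCF cardC; have sCY := subset_trans sCF (nonadj_subset T0).
have dTC : [disjoint T0 & C].
  rewrite disjoint_sym disjoints_subset; apply/subsetP => x /(subsetP sCY) xY.
  by rewrite !inE xY.
have iTC := indep_setU_nonadj iS sCF.
have cardTC : #|T0 :|: C| = i.+1.
  rewrite cardsU (disjoint_setI0 dTC) cards0 subn0 cardC -cardS -(cardsID Y S).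
  by rewrite addnS addnC.
have := sum_a0 _ iTC cardTC; rewrite sum_setD1_setU // big1 ?add0r => [|v vT0].
  by rewrite (sum_setD1_ksum (fun A => a (T0 :|: A)) cardC).
have cardTCv : #|(T0 :|: C) :\ v| = i.
  by move: (cardsD1 v (T0 :|: C)); rewrite cardTC inE vT0 => -[].
apply: IHt (indepS (subD1set _ v) iTC) cardTCv.
have : ((T0 :|: C) :\ v) :\: Y \subset T0 :\ v.
  apply/subsetP => x; rewrite !inE => /andP[xNY /andP[xv /orP[xT0|/(subsetP sCY)]]].
    by rewrite xv.
  by rewrite (negbTE xNY).
move/subset_leq_card/leq_ltn_trans; apply.
by move: lt_St; rewrite (cardsD1 v) vT0.
Qed.

End Lifting.

Section SquarefreeMonomials.
Variable m : nat.

Definition mnm_set (S : {set 'I_m}) : 'X_{1..m} := [multinom (i \in S : nat) | i < m].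

Lemma mnm_setE (S : {set 'I_m}) i : mnm_set S i = (i \in S).
Proof. exact: mnmE. Qed.

Lemma mdeg_mnm_set (S : {set 'I_m}) : mdeg (mnm_set S) = #|S|.
Proof.
rewrite mdegE -sum1_card [RHS]big_mkcond /=.
by apply: eq_bigr => i _; rewrite mnm_setE; case: (i \in S).
Qed.

Lemma mnm_setD1 (S : {set 'I_m}) u : u \in S -> mnm_set S = (U_(u) + mnm_set (S :\ u))%MM.
Proof.
move=> uS; apply/mnmP => i; rewrite mnmDE !mnm_setE mnm1E !inE.
by case: (eqVneq u i) => [<-|]; rewrite ?uS.
Qed.

Lemma mnm_setU1 (S : {set 'I_m}) u : u \notin S -> mnm_set (u |: S) = (U_(u) + mnm_set S)%MM.
Proof. by move=> uNS; rewrite (@mnm_setD1 (u |: S) u) ?setU11 ?setU1K. Qed.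

Lemma lep_mnm1_set (S : {set 'I_m}) u : (U_(u) <= mnm_set S)%MM = (u \in S).
Proof.
apply/mnm_lepP/idP => [/(_ u)|uS i]; first by rewrite mnm1E mnm_setE eqxx; case: (u \in S).
by rewrite mnm1E mnm_setE; case: (eqVneq u i) => [<-|]; rewrite ?uS.
Qed.

End SquarefreeMonomials.

Section ArtinianAlgebra.
Variables (K : fieldType) (m : nat) (G : rel 'I_m).
Implicit Types (p q : {mpoly K[m]}) (S : {set 'I_m}).

Lemma mcoeffMX_lep p (e k : 'X_{1..m}) :
  (p * 'X_[e])@_k = if (e <= k)%MM then p@_(k - e)%MM else 0.
Proof.
case: ifP => [/submK ek|lek]; first by rewrite -{1}ek addmC mcoeffMX.
apply/eqP; rewrite mcoeff_eq0 (perm_mem (msuppMX p e)); apply/mapP => -[e' _ ke].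
by rewrite ke lem_addr in lek.
Qed.

Lemma in_ideal0 : in_ideal G (0 : {mpoly K[m]}).
Proof.
by exists (fun _ _ => 0); rewrite big1 // => u _; rewrite big1 // => v _; rewrite mul0r.
Qed.

Lemma in_idealD p q : in_ideal G p -> in_ideal G q -> in_ideal G (p + q).
Proof.
move=> [cp ->] [cq ->]; exists (fun u v => cp u v + cq u v).
rewrite -big_split; apply: eq_bigr => u _; rewrite -big_split; apply: eq_bigr => v _.
by rewrite mulrDl.
Qed.

Lemma in_idealMl r p : in_ideal G p -> in_ideal G (r * p).
Proof.
move=> [cp ->]; exists (fun u v => r * cp u v).
rewrite mulr_sumr; apply: eq_bigr => u _; rewrite mulr_sumr; apply: eq_bigr => v _.
by rewrite mulrA.
Qed.

Lemma in_idealN p : in_ideal G p -> in_ideal G (- p).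
Proof. by rewrite -mulN1r; apply: in_idealMl. Qed.

Lemma in_idealB p q : in_ideal G p -> in_ideal G q -> in_ideal G (p - q).
Proof. by move=> idp /in_idealN; apply: in_idealD. Qed.

Lemma in_idealZ c p : in_ideal G p -> in_ideal G (c *: p).
Proof. by rewrite -mul_mpolyC; apply: in_idealMl. Qed.

Lemma in_ideal_sum (I : Type) (r : seq I) (P : pred I) (F : I -> {mpoly K[m]}) :
  (forall i, P i -> in_ideal G (F i)) -> in_ideal G (\sum_(i <- r | P i) F i).
Proof. by move=> idF; apply: big_ind => //; [exact: in_ideal0 | exact: in_idealD]. Qed.

Lemma in_ideal_gen u v : (u == v) || G u v -> in_ideal G ('X_u * 'X_v : {mpoly K[m]}).
Proof.
move=> uv; exists (fun a b => ((a == u) && (b == v))%:R).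
rewrite (bigD1 u) //= (bigD1 v) //= !eqxx mul1r big1 ?addr0 => [|b /andP[_ /negbTE->]].
  by rewrite big1 ?addr0 // => a /negbTE au; rewrite big1 // => b _; rewrite au mul0r.
by rewrite andbF mul0r.
Qed.

Lemma in_ideal_X_gen (mm : 'X_{1..m}) u v :
  (U_(u) + U_(v) <= mm)%MM -> (u == v) || G u v -> in_ideal G ('X_[mm] : {mpoly K[m]}).
Proof.
move=> /submK <- uv; rewrite !mpolyXD; apply: in_idealMl; exact: in_ideal_gen.
Qed.

Lemma lep_gen_mnm_set S u v : (U_(u) + U_(v) <= mnm_set S)%MM =
  [&& u \in S, v \in S & u != v].
Proof.
apply/mnm_lepP/and3P => [le_uv|[uS vS uv] i].
  have := le_uv v; have := le_uv u; rewrite !mnmDE !mnm1E !mnm_setE !eqxx.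
  case: (eqVneq u v) => [->|uv]; first by case: (v \in S).
  by case: (u \in S); case: (v \in S).
rewrite mnmDE !mnm1E mnm_setE.
case: (eqVneq u i) => [<-|_]; first by rewrite uS eq_sym (negbTE uv).
by case: (eqVneq v i) => [<-|]; rewrite ?vS.
Qed.

Lemma in_ideal_X_nindep S : ~~ indep G S -> in_ideal G ('X_[mnm_set S] : {mpoly K[m]}).
Proof.
case/forallPn => u; rewrite negb_imply => /andP[uS /forallPn[v]].
rewrite negb_imply => /andP[vS]; rewrite negb_imply negbK => /andP[uv Guv].
by apply: (in_ideal_X_gen (u := u) (v := v)); rewrite ?lep_gen_mnm_set ?uS ?vS ?uv ?Guv ?orbT.
Qed.

Lemma in_ideal_X_or_indep (mm : 'X_{1..m}) :
  in_ideal G ('X_[mm] : {mpoly K[m]}) \/ exists2 S, indep G S & mm = mnm_set S.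
Proof.
case: (boolP [exists i, (1 < mm i)%N]) => [/existsP[i lt1mi]|/existsPn le1m].
  left; apply: (in_ideal_X_gen (u := i) (v := i)); last by rewrite eqxx.
  by apply/mnm_lepP => j; rewrite mnmDE mnm1E; case: eqVneq => [<-|].
set S := [set i | (0 < mm i)%N].
have -> : mm = mnm_set S.
  by apply/mnmP => i; rewrite mnm_setE inE; move: (le1m i); case: (mm i) => [|[]].
by case: (boolP (indep G S)) => [indepS|/in_ideal_X_nindep]; [right; exists S | left].
Qed.

Lemma in_idealP p : in_ideal G p <-> forall S, indep G S -> p@_(mnm_set S) = 0.
Proof.
split=> [[c ->] S /indepP indepS | coef0].
  rewrite raddf_sum big1 // => u _; rewrite raddf_sum big1 // => v uv.
  rewrite -mpolyXD /= mcoeffMX_lep lep_gen_mnm_set.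
  case: (boolP (u \in S)) => //= uS; case: (boolP (v \in S)) => //= vS.
  case: (eqVneq u v) uv => //= uv Guv.
  by move: (indepS u v uS vS uv); rewrite Guv.
rewrite (mpolyE p); apply: in_ideal_sum => mm _.
case: (in_ideal_X_or_indep mm) => [|[S indepS ->]]; first exact: in_idealZ.
by rewrite coef0 // scale0r; exact: in_ideal0.
Qed.

Lemma mcoeff_ell_mnm_set f S :
  (ell K m * f)@_(mnm_set S) = \sum_(v in S) f@_(mnm_set (S :\ v)).
Proof.
rewrite /ell mulr_suml raddf_sum /= [RHS]big_mkcond /=; apply: eq_bigr => u _.
rewrite mulrC mcoeffMX_lep lep_mnm1_set; case: ifP => // uS.
by rewrite (mnm_setD1 uS) addmC addmK.
Qed.

Lemma mult_injective_of_indep (Y : {set 'I_m}) (nbr : 'I_m -> 'I_m) i :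
  [pchar K] =i pred0 -> indep G Y ->
  (forall x y, x \notin Y -> y \in Y -> G x y || G y x -> y = nbr x) ->
  (2 * i < #|Y|)%N -> mult_injective K G i.
Proof.
move=> K_char0 indepY Y_nbr_unique lt_iY f homf /in_idealP ellf0; apply/in_idealP => S indepS.
have [cardS|/negbTE cardS] := eqVneq #|S| i; last first.
  by rewrite -(mdeg_mnm_set S) in cardS; apply: (dhomog_nemf_coeff homf); rewrite cardS.
apply: (eq0_of_sum_setD1_eq0 (a := fun S => f@_(mnm_set S)) K_char0 indepY Y_nbr_unique lt_iY)
  => //.
by move=> S' indepS' _; rewrite -mcoeff_ell_mnm_set ellf0.
Qed.

Definition in_image_ell i (g : {mpoly K[m]}) :=
  exists2 f : {mpoly K[m]}, f \is i.-homog & in_ideal G (g - ell K m * f).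

Lemma in_image_ell_ideal i g : in_ideal G g -> in_image_ell i g.
Proof. by exists 0; rewrite ?dhomog0 // mulr0 subr0. Qed.

Lemma in_image_ell_trade i g g' h : h \is i.-homog ->
  in_ideal G (ell K m * h - g - g') -> in_image_ell i g' -> in_image_ell i g.
Proof.
move=> homh idl [f' homf' idf']; exists (h - f'); first exact: rpredB.
rewrite (_ : _ - _ = - (g' - ell K m * f') - (ell K m * h - g - g')); last by ring.
exact: in_idealB (in_idealN idf') idl.
Qed.

Lemma mult_surjective_of_indep i :
  (forall S, indep G S -> #|S| = i.+1 -> in_image_ell i 'X_[mnm_set S]) ->
  mult_surjective K G i.
Proof.
move=> imS g homg; suff [f homf idf] : in_image_ell i g by exists f.
rewrite (mpolyE g) big_seq; apply: big_ind => [|g1 g2 [f1 hf1 id1] [f2 hf2 id2]|mm mm_g].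
- exact/in_image_ell_ideal/in_ideal0.
- exists (f1 + f2); first exact: rpredD.
  by rewrite mulrDr opprD addrACA; apply: in_idealD.
have [f homf idf] : in_image_ell i 'X_[mm].
  have /dhomogP/(_ mm mm_g) degmm := homg.
  case: (in_ideal_X_or_indep mm) => [/in_image_ell_ideal //|[S indepS mmE]].
  by rewrite mmE; apply: imS; rewrite // -mdeg_mnm_set -mmE.
exists (g@_mm *: f); first exact: rpredZ.
by rewrite -scalerAr -scalerBr; apply: in_idealZ.
Qed.

Lemma in_ideal_X_mul_mnm_set u (F : {set 'I_m}) : (u \in F) || [exists w in F, G u w] ->
  in_ideal G ('X_u * 'X_[mnm_set F] : {mpoly K[m]}).
Proof.
have gen w : w \in F -> (u == w) || G u w -> in_ideal G ('X_u * 'X_[mnm_set F] : {mpoly K[m]}).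
  move=> wF uw; rewrite (mnm_setD1 wF) mpolyXD mulrA mulrC.
  by apply: in_idealMl; apply: in_ideal_gen.
case/orP => [uF|/existsP[w /andP[wF Guw]]]; first by apply: (gen u uF); rewrite eqxx.
by apply: (gen w wF); rewrite Guw orbT.
Qed.

End ArtinianAlgebra.

Section WhiskeredGraph.
Variables (n : nat) (H : rel 'I_n).
Local Notation G := (whisker H).

Lemma split_lshift (i : 'I_n) : split (lshift n i) = inl i.
Proof. exact: (@unsplitK n n (inl i)). Qed.

Lemma split_rshift (i : 'I_n) : split (rshift n i) = inr i.
Proof. exact: (@unsplitK n n (inr i)). Qed.

Lemma whisker_xx i j : G (lshift n i) (lshift n j) = H i j.
Proof. by rewrite /whisker !split_lshift. Qed.

Lemma whisker_xy i j : G (lshift n i) (rshift n j) = (i == j).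
Proof. by rewrite /whisker split_lshift split_rshift. Qed.

Lemma whisker_yx i j : G (rshift n i) (lshift n j) = (i == j).
Proof. by rewrite /whisker split_lshift split_rshift. Qed.

Lemma whisker_yy i j : G (rshift n i) (rshift n j) = false.
Proof. by rewrite /whisker !split_rshift. Qed.

Variant whisker_vertex_spec : 'I_(n + n) -> Type :=
  | WhiskerX i : whisker_vertex_spec (lshift n i)
  | WhiskerY i : whisker_vertex_spec (rshift n i).

Lemma whisker_vertexP v : whisker_vertex_spec v.
Proof. by rewrite -(splitK v); case: (split v) => i; constructor. Qed.

Definition whisker_base (v : 'I_(n + n)) : 'I_n :=
  match split v with inl i | inr i => i end.

Lemma whisker_has_edge : (n < edge_count G)%N -> exists i j, H i j.
Proof.
case: (boolP [exists i, exists j, H i j]) => [/existsP[i /existsP[j Hij]]|/existsPn noH].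
  by exists i, j.
have : [set e : 'I_(n + n) * 'I_(n + n) | (e.1 < e.2)%N && G e.1 e.2]
    \subset [set (lshift n i, rshift n i) | i : 'I_n].
  apply/subsetP => -[a b]; rewrite inE /= => /andP[].
  case: (whisker_vertexP a) => i; case: (whisker_vertexP b) => j /= lt_ab.
  - by rewrite whisker_xx; move: (noH i) => /existsPn/(_ j)/negbTE ->.
  - by rewrite whisker_xy => /eqP <-; apply/imsetP; exists i.
  - by move: lt_ab; have := ltn_ord j; lia.
  - by rewrite whisker_yy.
move/subset_leq_card/leq_trans/(_ (leq_imset_card _ _)); rewrite card_ord.
by rewrite /edge_count leqNgt => /negbTE ->.
Qed.

Lemma indep_whisker_pair (S : {set 'I_(n + n)}) i : indep G S ->
  ~~ ((lshift n i \in S) && (rshift n i \in S)).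
Proof.
move=> /indepP indepS; apply/andP => -[xS yS].
by move: (indepS _ _ xS yS); rewrite eq_lrshift whisker_xy eqxx => /(_ isT).
Qed.

Lemma lshift_notin_setD1 (S : {set 'I_(n + n)}) v : indep G S -> rshift n v \in S ->
  lshift n v \notin S :\ rshift n v.
Proof.
move=> indepS yvS; rewrite !inE eq_lrshift /=.
by move: (indep_whisker_pair v indepS); rewrite yvS andbT.
Qed.

Lemma indep_whisker_cover (S : {set 'I_(n + n)}) i : indep G S -> #|S| = n ->
  (lshift n i \in S) || (rshift n i \in S).
Proof.
move=> indepS cardS.
have base_inj : {in S &, injective whisker_base}.
  move=> u v; case: (whisker_vertexP u) => a; case: (whisker_vertexP v) => b;
    rewrite /whisker_base ?split_lshift ?split_rshift => aS bS // eq_ab; subst b;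
    by move: (indep_whisker_pair a indepS); rewrite ?aS ?bS.
have : i \in whisker_base @: S.
  have/eqP -> : whisker_base @: S == [set: 'I_n].
    by rewrite eqEcard subsetT cardsT card_ord card_in_imset // cardS leqnn.
  by rewrite inE.
case/imsetP => v; case: (whisker_vertexP v) => b;
  by rewrite /whisker_base ?split_lshift ?split_rshift => bS ->; rewrite bS ?orbT.
Qed.

Lemma mult_injective_whisker (K : fieldType) i :
  [pchar K] =i pred0 -> (2 * i < n)%N -> mult_injective K G i.
Proof.
move=> K_char0 lt_in; apply: (@mult_injective_of_indep _ _ _
  [set rshift n j | j : 'I_n] (fun v => rshift n (whisker_base v))) => //.
- by apply/indepP => _ _ /imsetP[a _ ->] /imsetP[b _ ->] _; rewrite whisker_yy.
- move=> v y; case: (whisker_vertexP v) => a; last by rewrite imset_f.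
  move=> _ /imsetP[b _ ->]; rewrite whisker_xy whisker_yx eq_sym orbb.
  by rewrite /whisker_base split_lshift => /eqP ->.
- by rewrite card_imset ?card_ord //; exact: rshift_inj.
Qed.

Section TopDegree.
Variables (K : fieldType) (i0 j0 : 'I_n).
Hypothesis H_irr : irreflexive H.
Hypothesis H_i0j0 : H i0 j0.
Local Notation ell := (ell K (n + n)).

Lemma indep_whisker_has_y (S : {set 'I_(n + n)}) : indep G S -> #|S| = n ->
  exists v, rshift n v \in S.
Proof.
move=> indepS cardS.
have i0j0 : i0 != j0 by apply: contraTneq H_i0j0 => ->; rewrite H_irr.
have : ~~ ((lshift n i0 \in S) && (lshift n j0 \in S)).
  apply/andP => -[x0S x1S]; move/indepP: indepS => /(_ _ _ x0S x1S).
  by rewrite eq_lshift i0j0 whisker_xx H_i0j0 => /(_ isT).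
have cover i := indep_whisker_cover i indepS cardS.
by case/nandP => xNS; [exists i0; move: (cover i0) | exists j0; move: (cover j0)];
  rewrite (negbTE xNS).
Qed.

Lemma ell_mul_whisker (S : {set 'I_(n + n)}) v :
  indep G S -> #|S| = n -> rshift n v \in S ->
  in_ideal G (ell * 'X_[mnm_set (S :\ rshift n v)] - 'X_[mnm_set S]
    - 'X_[mnm_set (lshift n v |: (S :\ rshift n v))]).
Proof.
move=> indepS cardS yvS; set F := S :\ rshift n v.
have xvNF := lshift_notin_setD1 indepS yvS.
rewrite /ell mulr_suml (bigD1 (rshift n v)) // (bigD1 (lshift n v)) /=; last first.
  by rewrite eq_lrshift.
rewrite -!mpolyXD -(mnm_setD1 yvS) -(mnm_setU1 xvNF).
set R := \sum_(_ | _) _.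
rewrite [_ + (_ + R)]addrC addrK [_ + R]addrC addrK.
apply: in_ideal_sum => u /andP[uNyv uNxv]; apply: in_ideal_X_mul_mnm_set.
have inF w : w \in S -> w != rshift n v -> w \in F by rewrite !inE => -> ->.
case: (whisker_vertexP u) uNyv uNxv => w uNyv uNxv.
  have wNv : w != v by rewrite eq_lshift in uNxv.
  case/orP: (indep_whisker_cover w indepS cardS) => wS; first by rewrite inF ?eq_lrshift.
  apply/orP; right; apply/existsP; exists (rshift n w).
  by rewrite inF ?eq_rshift // whisker_xy eqxx.
have wNv : w != v by rewrite eq_rshift in uNyv.
case/orP: (indep_whisker_cover w indepS cardS) => wS; last by rewrite inF ?eq_rshift.
apply/orP; right; apply/existsP; exists (lshift n w).
by rewrite inF ?eq_lrshift // whisker_yx eqxx.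
Qed.

Lemma in_image_ell_whisker_top (S : {set 'I_(n + n)}) : indep G S -> #|S| = n ->
  in_image_ell G n.-1 ('X_[mnm_set S] : {mpoly K[n + n]}).
Proof.
have [t] := ubnP #|[set i | rshift n i \in S]|.
elim: t S => // t IHt S lt_yt indepS cardS.
have [v yvS] := indep_whisker_has_y indepS cardS.
have idl := ell_mul_whisker indepS cardS yvS.
set F := S :\ rshift n v in idl *; set S' := lshift n v |: F in idl *.
have cardF : #|F| = n.-1.
  by have := cardsD1 (rshift n v) S; rewrite yvS cardS add1n => /(congr1 predn) ->.
have homF : ('X_[mnm_set F] : {mpoly K[n + n]}) \is n.-1.-homog.
  by rewrite dhomogX /= mdeg_mnm_set cardF.
apply: (in_image_ell_trade homF idl).
case: (boolP (indep G S')) => [indepS'|/(in_ideal_X_nindep K)/in_image_ell_ideal //].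
apply: IHt indepS' _.
  have -> : [set i | rshift n i \in S'] = [set i | rshift n i \in S] :\ v.
    by apply/setP => i; rewrite !inE eq_rlshift eq_rshift.
  by move: lt_yt; rewrite (cardsD1 v) inE yvS add1n ltnS.
rewrite cardsU1 (lshift_notin_setD1 indepS yvS) cardF add1n prednK //.
exact: leq_ltn_trans (leq0n v) (ltn_ord v).
Qed.

End TopDegree.
End WhiskeredGraph.

Theorem corollary3p2 (K : fieldType) (n : nat) (H : rel 'I_n)
    (H_sym : ssrbool.symmetric H) (H_irr : ssrbool.irreflexive H)
    (K_char0 : [pchar K]%R =i pred0)
    (hE : (n.+1 <= edge_count (whisker H))%N) :
  (forall i : nat, (2 * i < n)%N ->
     maximal_rank K (whisker H) i /\ mult_injective K (whisker H) i)
  /\ maximal_rank K (whisker H) n.-1.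
Proof.
have [i0 [j0 H_i0j0]] := whisker_has_edge hE.
split=> [i lt_in|].
  by have inj := mult_injective_whisker K_char0 lt_in; split; [left|].
right; apply: mult_surjective_of_indep => S indepS cardS.
apply: (in_image_ell_whisker_top K H_irr H_i0j0 indepS).
by rewrite cardS prednK // (leq_ltn_trans (leq0n i0) (ltn_ord i0)).
Qed.
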